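(* For every set $E\subset\mathbb R^+$, $$\mathrm{Dim}_\mathrm{H}E=\inf\Big\{\rho\ge0:\sum_{n\ge1}\widetilde\nu^n_\rho(E)<\infty\Big\},$$ where for $n\ge1$ and $\rho\ge0$, $$\widetilde\nu^n_\rho(E)=\inf\Big\{\sum_{i=1}^m\Big(\frac{|Q_i|}{2^n}\Big)^\rho: Q_i\subset\mathcal S_n \text{ intervals with integer endpoints},\ \frac{|Q_i|}{n^2}\in\mathbb N^*,\ E\cap\mathcal S_n\subset\bigcup_{i=1}^m Q_i\Big\}$$ (infimum over finite families).
   Context: $|Q|$ denotes the length of an interval $Q$, and $\mathbb N^*$ the positive integers. Let $\mathcal S_n=[2^{n-1},2^n)$ for $n\ge1$. For $E\subset\mathbb R^+$, $\rho\ge0$ and $n\ge1$, let $$\nu^n_\rho(E)=\inf\Big\{\sum_{i=1}^m\Big(\frac{|Q_i|}{2^n}\Big)^\rho: Q_i\subset\mathcal S_n \text{ non-trivial intervals with integer endpoints},\ E\cap\mathcal S_n\subset\bigcup_{i=1}^m Q_i\Big\},$$ the infimum being over finite families. The macroscopic Hausdorff dimension is $\mathrm{Dim}_\mathrm{H}E=\inf\{\rho\ge0:\sum_{n\ge1}\nu^n_\rho(E)<\infty\}$. *)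

From HB Require Import structures.
From mathcomp Require Import all_boot all_order all_algebra.
From mathcomp Require Import all_classical all_reals all_analysis.
Set Implicit Arguments. Unset Strict Implicit. Unset Printing Implicit Defensive.
Import Order.TTheory GRing.Theory Num.Theory.
Local Open Scope classical_set_scope.
Local Open Scope ring_scope.

Definition Sn {R : realType} (n : nat) : set R :=
  [set x : R | (2 ^+ n.-1 <= x) /\ (x < 2 ^+ n)].

(* Q is a (non-trivial) interval with integer endpoints a < b (open, closed
   or half-open): it lies between the open and the closed interval. *)
Definition int_interval {R : realType} (Q : set R) (a b : int) : Prop :=
  (a < b)%R /\ `]a%:~R, b%:~R[%classic `<=` Q /\ Q `<=` `[a%:~R, b%:~R]%classic.

(* Generic covering quantity: infimum over finite families (Q_i)_{i<m} of
   intervals with integer endpoints a_i < b_i, Q_i ⊂ S_n, whose length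
   b_i - a_i satisfies the admissibility condition [adm n (b_i - a_i)],
   covering E ∩ S_n, of sum_i ((b_i - a_i)/2^n)^rho. inf of ∅ is +oo. *)
Definition nu_gen {R : realType} (adm : nat -> int -> Prop)
    (n : nat) (rho : R) (E : set R) : \bar R :=
  ereal_inf [set v | exists (m : nat) (Q : 'I_m -> set R) (a b : 'I_m -> int),
    (forall i, int_interval (Q i) (a i) (b i) /\ Q i `<=` Sn n /\ adm n (b i - a i))
    /\ E `&` Sn n `<=` \bigcup_(i in [set: 'I_m]) Q i
    /\ v = ((\sum_(i < m) powR (((b i - a i)%:~R : R) / 2 ^+ n) rho)%:E)].

Definition nu {R : realType} (n : nat) (rho : R) (E : set R) : \bar R :=
  nu_gen (fun _ _ => True) n rho E.

Definition nu_tilde {R : realType} (n : nat) (rho : R) (E : set R) : \bar R :=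
  nu_gen (fun n L => exists k : nat, (0 < k)%N /\ L = ((k * n ^ 2)%N)%:Z) n rho E.

Definition DimH {R : realType} (E : set R) : \bar R :=
  ereal_inf [set r%:E | r in [set r : R | 0 <= r /\
     (\sum_(1 <= n <oo) nu n r E < +oo)%E]].

(* One inequality is easy: nu <= nu_tilde, and nu^n_rho <= 1 takes care of
   the finitely many n below the starting index of the nu_tilde series.
   For the other, fix rho < rho' and n so large that 2 n^2 <= 2^n and
   n^(2 rho') <= 2^(n (rho' - rho)).  Every integer interval Q in S_n is then
   covered by at most two intervals whose lengths are positive multiples of
   n^2, each of rho'-cost at most the rho-cost of Q: if |Q| < n^2, enlarge Q
   to an interval of length n^2 inside S_n, of cost (n^2/2^n)^rho' <= 2^(-n rho);
   otherwise cover Q by the two intervals of length floor(|Q|/n^2) n^2 >= |Q|/2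
   sitting at its two ends.  Hence nu_tilde^n_rho' <= 2 nu^n_rho for large n. *)

From HB Require Import structures.
From mathcomp Require Import all_boot all_order all_algebra.
From mathcomp Require Import all_classical all_reals all_analysis.
From mathcomp Require Import zify ring lra.
Set Implicit Arguments.
Unset Strict Implicit.
Unset Printing Implicit Defensive.
Import Order.TTheory GRing.Theory Num.Theory.
Local Open Scope classical_set_scope.
Local Open Scope ring_scope.

Section IntervalsInSn.
Variable R : realType.
Implicit Types (n : nat) (Q : set R) (a b c d : int).

Lemma intr_exp2 n : ((2 ^ n)%N%:Z%:~R : R) = 2 ^+ n.
Proof. by rewrite -[LHS]/((2 ^ n)%N%:R) natrX. Qed.

Lemma SnE n (x : R) :
  Sn n x <-> (2 ^ n.-1)%N%:Z%:~R <= x /\ x < (2 ^ n)%N%:Z%:~R.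
Proof. by rewrite !intr_exp2. Qed.

Lemma int_interval_Sn n : (0 < n)%N ->
  int_interval (Sn n : set R) (2 ^ n.-1)%N (2 ^ n)%N.
Proof.
case: n => // n _; split; first by rewrite ltz_nat expnS /= ltn_Pmull ?expn_gt0.
split => x; first by rewrite /= in_itv /= => /andP[x_ge x_lt]; apply/SnE; rewrite ltW.
by move=> /SnE[x_ge x_lt]; rewrite /= in_itv /= x_ge ltW.
Qed.

Lemma int_interval_sub_itv Q a b :
  int_interval Q a b -> forall x, Q x -> a%:~R <= x <= b%:~R.
Proof. by move=> [_ [_ Qab]] x /Qab; rewrite /= in_itv. Qed.

Lemma int_interval_Sn_bounds n Q a b : int_interval Q a b -> Q `<=` Sn n ->
  ((2 ^ n.-1)%N%:Z <= a /\ b <= (2 ^ n)%N%:Z)%R.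
Proof.
move=> [ab [oQ _]] QS.
(* Q may be open, so S_n is tested at points strictly inside ]a, b[. *)
have inSn (x : R) : a%:~R < x -> x < b%:~R ->
    (2 ^ n.-1)%N%:Z%:~R <= x /\ x < (2 ^ n)%N%:Z%:~R.
  by move=> ax xb; apply/SnE/QS/oQ; rewrite /= in_itv /= ax xb.
have a1b : ((a + 1)%:~R : R) <= b%:~R by rewrite ler_int; lia.
split; rewrite leNgt; apply/negP => bad.
- have : ((a + 1)%:~R : R) <= (2 ^ n.-1)%N%:Z%:~R by rewrite ler_int; lia.
  have := inSn (a%:~R + 2^-1); rewrite intrD in a1b * => + lo; lra.
- have : (((2 ^ n)%N%:Z + 1)%:~R : R) <= b%:~R by rewrite ler_int; lia.
  have := inSn (b%:~R - 2^-1); rewrite !intrD in a1b * => + hi; lra.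
Qed.

Lemma int_intervalI Q a b c d : int_interval Q a b ->
  (a <= c)%R -> (c < d)%R -> (d <= b)%R ->
  int_interval (Q `&` `[c%:~R, d%:~R]%classic) c d.
Proof.
move=> [_ [oQ _]]; rewrite -(ler_int R) => ac cd; rewrite -(ler_int R) => db.
split => //; split.
- move=> x; rewrite /= in_itv /= => /andP[cx xd]; split; last by rewrite in_itv /= !ltW.
  by apply: oQ; rewrite /= in_itv /=; apply/andP; split; lra.
- by move=> x [_]; rewrite /= !in_itv.
Qed.

Lemma int_interval_cover_ends Q a b (L : int) : int_interval Q a b ->
  (0 < L)%R -> (L <= b - a)%R -> (b - a <= 2 * L)%R ->
  Q `<=` (Q `&` `[a%:~R, (a + L)%:~R]%classic) `|` (Q `&` `[(b - L)%:~R, b%:~R]%classic).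
Proof.
move=> Qab L0 Lba baL x Qx; have /andP[ax xb] := int_interval_sub_itv Qab Qx.
have : ((b - L)%:~R : R) <= (a + L)%:~R by rewrite ler_int; lia.
rewrite intrB intrD => overlap.
case: (lerP x (a + L)%:~R) => [xaL | aLx]; [left | right]; split => //.
  by rewrite /= in_itv /= ax -intrD.
by rewrite /= in_itv /= xb andbT; rewrite intrD in aLx; lra.
Qed.

Lemma int_interval_Sn_widen n Q a b (K : nat) : (0 < n)%N ->
  int_interval Q a b -> Q `<=` Sn n ->
  (b - a <= K)%R -> (K <= 2 ^ n.-1)%N ->
  exists a1 : int, [/\ (2 ^ n.-1)%N%:Z <= a1, a1 + K%:Z <= (2 ^ n)%N%:Z
                     & Q `<=` `[a1%:~R, (a1 + K%:Z)%:~R]%classic]%R.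
Proof.
move=> n0 Qab QS baK Kn; have [na bn] := int_interval_Sn_bounds Qab QS.
have n2 : (2 ^ n)%N = (2 * 2 ^ n.-1)%N by case: n n0 {QS na bn Kn} => // n _; rewrite expnS.
have [a1 [na1 a1a a1K ba1]] : exists a1 : int,
    [/\ (2 ^ n.-1)%N%:Z <= a1, a1 <= a, a1 + K%:Z <= (2 ^ n)%N%:Z & b <= a1 + K%:Z]%R.
  case: (lerP a ((2 ^ n)%N%:Z - K%:Z)) => h; first by exists a; split; lia.
  by exists ((2 ^ n)%N%:Z - K%:Z); split; lia.
exists a1; split => // x Qx; have /andP[ax xb] := int_interval_sub_itv Qab Qx.
have := ler_int R a1 a; have := ler_int R b (a1 + K%:Z).
by rewrite a1a ba1 /= in_itv /= => ? ?; apply/andP; split; lra.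
Qed.

End IntervalsInSn.

Section Coverings.
Variable R : realType.
Implicit Types (n : nat) (rho : R) (E Q : set R) (a b : int)
  (adm : nat -> int -> Prop).

Definition cost n rho (L : int) : R := powR (L%:~R / 2 ^+ n) rho.

Definition admissible adm n Q a b : Prop :=
  int_interval Q a b /\ Q `<=` Sn n /\ adm n (b - a).

Definition tilde_adm n (L : int) : Prop :=
  exists k : nat, (0 < k)%N /\ L = (k * n ^ 2)%N%:Z.

Lemma cost_le n rho rho' (L L' : int) : 0 <= rho <= rho' ->
  (0 <= L)%R -> (L <= L')%R -> (0 < L')%R -> (L' <= (2 ^ n)%N%:Z)%R ->
  cost n rho' L <= cost n rho L'.
Proof.
move=> /andP[rho0 rho_le] L0 LL' L'0 L'n.
have n0 : (0 : R) < 2 ^+ n by rewrite exprn_gt0.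
have y0 : 0 < L'%:~R / (2 ^+ n : R) by rewrite divr_gt0 // ltr0z.
have y1 : L'%:~R / (2 ^+ n : R) <= 1 by rewrite ler_pdivrMr // mul1r -intr_exp2 ler_int.
apply: (@le_trans _ _ (cost n rho' L')); last by apply: ger_powR; rewrite ?y0.
apply: ge0_ler_powR; first lra.
- by rewrite nnegrE divr_ge0 ?ler0z // ltW.
- by rewrite nnegrE ltW.
- by rewrite ler_pM2r ?invr_gt0 // ler_int.
Qed.

Lemma tilde_refines n rho rho' Q a b :
  (0 < n)%N -> (2 * n ^ 2 <= 2 ^ n)%N -> 0 <= rho <= rho' ->
  cost n rho' (n ^ 2)%N <= cost n rho 1 ->
  admissible (fun _ _ => True) n Q a b ->
  exists (Q1 Q2 : set R) (a1 b1 a2 b2 : int),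
    [/\ admissible tilde_adm n Q1 a1 b1, admissible tilde_adm n Q2 a2 b2,
        Q `<=` Q1 `|` Q2, cost n rho' (b1 - a1) <= cost n rho (b - a)
      & cost n rho' (b2 - a2) <= cost n rho (b - a)].
Proof.
move=> n0 n_large /andP[rho0 rho_le] cost_K [Qab [QS _]].
have [na bn] := int_interval_Sn_bounds Qab QS; have [ab _] := Qab.
have n2 : (2 ^ n)%N = (2 * 2 ^ n.-1)%N.
  by case: n n0 {n_large cost_K QS na bn} => // n _; rewrite expnS.
set K := (n ^ 2)%N in n_large cost_K *.
have K0 : (0 < K)%N by rewrite expn_gt0 n0.
have cost_Q (L : int) : 0 <= L <= b - a -> cost n rho' L <= cost n rho (b - a).
  by move=> /andP[L0 Lba]; apply: cost_le; rewrite ?rho0 ?rho_le //; lia.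
case: (ltP (b - a) K%:Z) => [short | long].
- have Kn : (K <= 2 ^ n.-1)%N by lia.
  have [a1 [na1 a1n Qa1]] := int_interval_Sn_widen n0 Qab QS (ltW short) Kn.
  pose Q1 : set R := Sn n `&` `[a1%:~R, (a1 + K%:Z)%:~R]%classic.
  have A1 : admissible tilde_adm n Q1 a1 (a1 + K%:Z).
    split; first by apply: int_intervalI (int_interval_Sn R n0) _ _ _; lia.
    by split; [move=> x [] | exists 1%N; split => //; lia].
  have c1 : cost n rho' (a1 + K%:Z - a1) <= cost n rho (b - a).
    rewrite (_ : a1 + K%:Z - a1 = K); last by lia.
    by apply: le_trans cost_K _; apply: cost_le; rewrite ?lexx ?rho0 //; lia.
  exists Q1, Q1, a1, (a1 + K%:Z), a1, (a1 + K%:Z); split => // x Qx.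
  by left; split; [exact: QS | exact: Qa1].
- have [Ln baLn] : exists Ln : nat, b - a = Ln%:Z by exists `|b - a|%N; lia.
  pose L := (Ln %/ K * K)%N.
  have [KL LLn LnL] : [/\ (K <= L)%N, (L <= Ln)%N & (Ln < L + K)%N].
    rewrite /L; split; first by rewrite leq_pmull // divn_gt0 //; lia.
      exact: leq_trunc_div.
    by rewrite -mulSnr ltn_ceil.
  have admL : tilde_adm n L by exists (Ln %/ K)%N; split => //; rewrite divn_gt0 //; lia.
  exists (Q `&` `[a%:~R, (a + L%:Z)%:~R]%classic), (Q `&` `[(b - L%:Z)%:~R, b%:~R]%classic),
    a, (a + L%:Z), (b - L%:Z), b; split.
  + split; first by apply: int_intervalI Qab _ _ _; lia.
    by split; [move=> x [/QS] | rewrite addrAC subrr add0r].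
  + split; first by apply: int_intervalI Qab _ _ _; lia.
    by split; [move=> x [/QS] | rewrite opprB addrA addrAC subrr add0r].
  + by apply: int_interval_cover_ends Qab _ _ _; lia.
  + by apply: cost_Q; rewrite addrAC subrr add0r; lia.
  + by apply: cost_Q; rewrite opprB addrA addrAC subrr add0r; lia.
Qed.

Local Open Scope ereal_scope.

Lemma nu_gen_ge0 adm n rho E : 0 <= nu_gen adm n rho E.
Proof.
apply: le_ereal_inf_tmp => _ [m [Q [a [b [_ [_ ->]]]]]].
by rewrite lee_fin sumr_ge0 // => i _; apply: powR_ge0.
Qed.

Lemma nu_gen_le_cover adm n rho E m (Q : 'I_m -> set R) (a b : 'I_m -> int) :
  (forall i, admissible adm n (Q i) (a i) (b i)) ->
  E `&` Sn n `<=` \bigcup_(i in [set: 'I_m]) Q i ->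
  nu_gen adm n rho E <= (\sum_(i < m) cost n rho (b i - a i))%:E.
Proof.
move=> QA EQ; apply: ge_ereal_inf.
by exists (\sum_(i < m) cost n rho (b i - a i))%:E => //; exists m, Q, a, b.
Qed.

Lemma nu_gen_le_adm adm adm' n rho E : (forall n L, adm' n L -> adm n L) ->
  nu_gen adm n rho E <= nu_gen adm' n rho E.
Proof.
move=> adm'_adm; apply: ereal_inf_le_tmp => _ [m [Q [a [b [QA [EQ ->]]]]]].
by exists m, Q, a, b; split => // i; have [? [? /adm'_adm]] := QA i.
Qed.

Lemma nu_le1 n rho E : (0 < n)%N -> (0 <= rho)%R -> nu n rho E <= 1.
Proof.
move=> n0 rho0.
apply: (le_trans (@nu_gen_le_cover (fun _ _ => True) n rho E 1 (fun=> Sn n)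
  (fun=> (2 ^ n.-1)%N%:Z) (fun=> (2 ^ n)%N%:Z) _ _)).
- by move=> _; split; [exact: int_interval_Sn | split].
- by move=> x [_ Snx]; exists ord0.
have cost_Sn : cost n rho (2 ^ n)%N = 1%R.
  by rewrite /cost intr_exp2 divff ?expf_neq0 // powR1.
have lo_le_hi : (2 ^ n.-1 <= 2 ^ n)%N by rewrite leq_pexp2l // leq_pred.
have := expn_gt0 2 n; rewrite big_ord1 lee_fin -cost_Sn cost_le ?lexx ?rho0 //; lia.
Qed.

Lemma nu_gen_le_twice adm adm' n rho rho' E :
  (forall Q a b, admissible adm n Q a b ->
    exists (Q1 Q2 : set R) (a1 b1 a2 b2 : int),
      [/\ admissible adm' n Q1 a1 b1, admissible adm' n Q2 a2 b2,
          Q `<=` Q1 `|` Q2, (cost n rho' (b1 - a1) <= cost n rho (b - a))%R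
        & (cost n rho' (b2 - a2) <= cost n rho (b - a))%R]) ->
  nu_gen adm' n rho' E <= 2%:E * nu_gen adm n rho E.
Proof.
move=> refine; rewrite -ereal_inf_pZl //.
apply: le_ereal_inf_tmp => _ [_ [m [Q [a [b [QA [EQ ->]]]]]] <-].
pose cheap (i : 'I_m) (p : set R * int * int) := admissible adm' n p.1.1 p.1.2 p.2 /\
  (cost n rho' (p.2 - p.1.2) <= cost n rho (b i - a i))%R.
have /choice[f f_cheap] : forall i, exists pq : (set R * int * int) * (set R * int * int),
    [/\ cheap i pq.1, cheap i pq.2 & Q i `<=` pq.1.1.1 `|` pq.2.1.1].
  move=> i; have [Q1 [Q2 [a1 [b1 [a2 [b2 [A1 A2 Q12 c1 c2]]]]]]] := refine _ _ _ (QA i).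
  by exists ((Q1, a1, b1), (Q2, a2, b2)).
pose g (j : 'I_(m + m)) := match fintype.split j with inl i => (f i).1 | inr i => (f i).2 end.
have split_l i : fintype.split (lshift m i) = inl i := unsplitK (inl i).
have split_r i : fintype.split (rshift m i) = inr i := unsplitK (inr i).
have g_cheap j : cheap (match fintype.split j with inl i => i | inr i => i end) (g j).
  by rewrite /g; case: (fintype.split j) => i; case: (f_cheap i).
apply: (le_trans (@nu_gen_le_cover adm' n rho' E _ (fun j => (g j).1.1)
  (fun j => (g j).1.2) (fun j => (g j).2) _ _)).
- by move=> j; case: (g_cheap j).
- move=> x /EQ[i _ Qix]; have [_ _ /(_ x Qix)[]] := f_cheap i.
  + by exists (lshift m i); rewrite // /g split_l.
  + by exists (rshift m i); rewrite // /g split_r.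
rewrite -EFinM lee_fin big_split_ord mulr2n mulrDl mul1r.
apply: lerD; apply: ler_sum => i _.
- by have := g_cheap (lshift m i); rewrite split_l => -[].
- by have := g_cheap (rshift m i); rewrite split_r => -[].
Qed.

Lemma nu_tilde_le_twice_nu n rho rho' E :
  (0 < n)%N -> (2 * n ^ 2 <= 2 ^ n)%N -> (0 <= rho <= rho')%R ->
  (cost n rho' (n ^ 2)%N <= cost n rho 1)%R ->
  nu_tilde n rho' E <= 2%:E * nu n rho E.
Proof. by move=> *; apply: nu_gen_le_twice => Q a b; apply: tilde_refines. Qed.

End Coverings.

Section Asymptotics.
Variable R : realType.

Lemma ln_le_twice_sqrt (x : R) : 0 < x -> ln x <= 2 * Num.sqrt x.
Proof.
move=> x0; have s0 : 0 < Num.sqrt x by rewrite sqrtr_gt0.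
rewrite -{1}(sqr_sqrtr (ltW x0)) lnXn // mulr2n.
have := ln_sublinear s0; lra.
Qed.

Lemma near_ln_sublinear (c d : R) : 0 <= c ->
  \forall n \near \oo, c * ln (n%:R : R) + d <= n%:R.
Proof.
move=> c0; set T := 2 * c + `|d| + 1.
have T1 : 1 <= T by rewrite /T; have := normr_ge0 d; lra.
near=> n.
have nT : T ^+ 2 <= n%:R by near: n; apply: nbhs_infty_ger.
have n0 : (0 : R) < n%:R by apply: lt_le_trans nT; rewrite exprn_gt0 //; lra.
set s := Num.sqrt (n%:R : R).
have ss : s ^+ 2 = n%:R by rewrite sqr_sqrtr // ltW.
have Ts : T <= s by rewrite -(ger0_norm (le_trans ler01 T1)) -sqrtr_sqr ler_wsqrtr.
have ln_s : c * ln (n%:R : R) <= c * (2 * s) by rewrite ler_wpM2l // ln_le_twice_sqrt.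
have d_le := ler_norm d; have d0 := normr_ge0 d.
have sT_s : 0 <= (s - T) * s by rewrite mulr_ge0 ?subr_ge0 //; lra.
have s1_d : 0 <= (s - 1) * `|d| by rewrite mulr_ge0 ?subr_ge0 //; lra.
rewrite -[X in _ <= X]ss; rewrite /T in sT_s; nra.
Unshelve. all: by end_near.
Qed.

Lemma ln_two_sq_le_exp2 (n : nat) : (0 < n)%N ->
  2 / ln 2 * ln (n%:R : R) + 1 <= n%:R -> (2 * n ^ 2 <= 2 ^ n)%N.
Proof.
move=> n0 ln_n; have ln2 : (0 : R) < ln 2 by rewrite ln_gt0 // ltr1n.
rewrite -(ler_nat R) -ler_ln ?posrE ?ltr0n ?expn_gt0 //; last by rewrite muln_gt0 expn_gt0 n0.
rewrite natrM !natrX lnM ?posrE ?exprn_gt0 ?ltr0n // !lnXn ?ltr0n //.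
have := ler_wpM2r (ltW ln2) ln_n; rewrite mulrDl mul1r mulrAC divfK ?gt_eqF //.
rewrite -[ln _ *+ 2]mulr_natl -[ln 2 *+ n]mulr_natl; lra.
Qed.

Lemma ln_cost_sq_le (n : nat) (rho rho' : R) : (0 < n)%N -> rho < rho' ->
  2 * rho' / ((rho' - rho) * ln 2) * ln (n%:R : R) <= n%:R ->
  cost n rho' (n ^ 2)%N <= cost n rho 1.
Proof.
move=> n0 rho_lt ln_n; have ln2 : (0 : R) < ln 2 by rewrite ln_gt0 // ltr1n.
have D0 : 0 < (rho' - rho) * ln (2 : R) by rewrite mulr_gt0 // subr_gt0.
have x0 : ((n ^ 2)%N%:Z%:~R / 2 ^+ n : R) != 0.
  by rewrite gt_eqF // divr_gt0 ?exprn_gt0 // ltr0z ltz_nat expn_gt0 n0.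
have y0 : ((1 : int)%:~R / 2 ^+ n : R) != 0 by rewrite gt_eqF // divr_gt0 ?exprn_gt0.
rewrite /cost /powR (negbTE x0) (negbTE y0) ler_expR -[1%:~R]/(1 : R) div1r.
rewrite -[(n ^ 2)%N%:~R]/((n ^ 2)%N%:R : R) natrX.
rewrite lnM ?posrE ?invr_gt0 ?exprn_gt0 ?ltr0n // lnV ?posrE ?exprn_gt0 // !lnXn ?ltr0n //.
have := ler_wpM2r (ltW D0) ln_n; rewrite mulrAC divfK ?gt_eqF //.
rewrite -[ln _ *+ 2]mulr_natl -[ln 2 *+ n]mulr_natl; nra.
Qed.

Lemma near_tilde_regime (rho rho' : R) : 0 <= rho < rho' ->
  \forall n \near \oo, [/\ (0 < n)%N, (2 * n ^ 2 <= 2 ^ n)%N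
                        & cost n rho' (n ^ 2)%N <= cost n rho 1].
Proof.
move=> /andP[rho0 rho_lt]; have ln2 : (0 : R) < ln 2 by rewrite ln_gt0 // ltr1n.
near=> n.
have n0 : (0 < n)%N by near: n; exact: nbhs_infty_gt.
split => //.
- apply: ln_two_sq_le_exp2 => //; near: n; apply: near_ln_sublinear.
  by rewrite divr_ge0 // ltW.
- apply: ln_cost_sq_le => //; rewrite -[X in X <= _]addr0; near: n.
  by apply: near_ln_sublinear; rewrite divr_ge0 ?mulr_ge0 // ltW // ?subr_gt0; lra.
Unshelve. all: by end_near.
Qed.

End Asymptotics.

Section Summability.
Variable R : realType.
Implicit Types (E : set R) (r : R).
Local Open Scope ereal_scope.

Lemma nu_summable_of_tilde E r (N : nat) : (0 <= r)%R -> (0 < N)%N ->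
  \sum_(N <= n <oo) nu_tilde n r E < +oo -> \sum_(1 <= n <oo) nu n r E < +oo.
Proof.
move=> r0 N0 tilde_fin.
rewrite (@nneseries_split _ _ 1 N.-1) ?add1n ?prednK //; last by move=> n _; apply: nu_gen_ge0.
apply: lte_add_pinfty.
  rewrite big_nat_cond; apply: lte_sum_pinfty => n /andP[/andP[n0 _] _].
  exact: le_lt_trans (nu_le1 E n0 r0) (ltry 1).
apply: le_lt_trans tilde_fin; apply: lee_nneseries => [n _ _|n _]; first exact: nu_gen_ge0.
exact: nu_gen_le_adm.
Qed.

Lemma tilde_summable_of_nu E r r' : (0 <= r < r')%R ->
  \sum_(1 <= n <oo) nu n r E < +oo ->
  exists N : nat, (1 <= N)%N /\ \sum_(N <= n <oo) nu_tilde n r' E < +oo.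
Proof.
move=> rr' nu_fin; have [N _ regime] := near_tilde_regime rr'.
have r_le : (0 <= r <= r')%R by case/andP: rr' => -> /ltW.
have N0 : (0 < N)%N by have [] := regime N (leqnn N).
exists N; split => //.
apply: (@le_lt_trans _ _ (\sum_(N <= n <oo) (2%:E * nu n r E))).
  rewrite [X in X <= _]eseries_cond [X in _ <= X]eseries_cond.
  apply: lee_nneseries => [n _ _|n /andP[_ Nn]]; first exact: nu_gen_ge0.
  by have [n0 n_large cost_n] := regime n Nn; apply: nu_tilde_le_twice_nu.
rewrite nneseriesZl; last by move=> n _; apply: nu_gen_ge0.
apply: lte_mul_pinfty => //; apply: le_lt_trans nu_fin.
rewrite [X in X <= _]eseries_cond [X in _ <= X]eseries_cond.
apply: subset_lee_nneseries => [n _|n /andP[_ Nn]]; first exact: nu_gen_ge0.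
by rewrite /= (leq_trans N0 Nn).
Qed.

End Summability.

Theorem lemma2 (R : realType) (E : set R) (hE : E `<=` [set x : R | 0 <= x]) :
  DimH E = ereal_inf [set r%:E | r in [set r : R | 0 <= r /\
     exists N : nat, (1 <= N)%N /\ (\sum_(N <= n <oo) nu_tilde n r E < +oo)%E]].
Proof.
apply/eqP; rewrite eq_le; apply/andP; split.
- apply: ereal_inf_le_tmp => _ [r [r0 [N [N0 tilde_fin]]] <-].
  by exists r => //; split => //; apply: nu_summable_of_tilde tilde_fin.
- apply: le_ereal_inf_tmp => _ [r [r0 nu_fin] <-]; apply/lee_addgt0Pr => e e0.
  have r_lt : 0 <= r < r + e by rewrite r0 ltrDl.
  have [N tilde_fin] := tilde_summable_of_nu r_lt nu_fin.
  apply: ge_ereal_inf; exists (r + e)%:E; last by rewrite EFinD.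
  by exists (r + e) => //; split; [rewrite addr_ge0 // ltW | exists N].
Qed.
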